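(* Let $X$ be a space and $p\in X$, and let $\{H_n:n\in\omega\}$ be a countable family of subsets of $X$ with $p\in\overline{\bigcup_{n\in\omega}H_n}$. If either (a) $X$ is strongly $L$-selective, or (b) $X$ is $L$-selective and every $H_n$ is closed, then there is a sequence of points of $\bigcup_{n\in\omega}H_n$ converging to $p$.
   Context: All spaces are assumed $T_1$. For spaces $Y$, $X$, a map $\varphi:Y\to\mathcal P(X)\setminus\{\emptyset\}$ is lower semicontinuous (l.s.c.) if $\{y:\varphi(y)\cap U\neq\emptyset\}$ is open in $Y$ for every open $U\subseteq X$; a selection is a map $f:Y\to X$ with $f(y)\in\varphi(y)$ for all $y$. $X$ is strongly $Y$-selective if every l.s.c. map $Y\to\mathcal P(X)\setminus\{\emptyset\}$ has a continuous selection, and $Y$-selective if every l.s.c. map from $Y$ to the nonempty closed subsets of $X$ has a continuous selection. (Strongly) $L$-selective means (strongly) $(\omega+1)$-selective, with $\omega+1$ carrying the order topology. *)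

From mathcomp Require Import all_boot all_order.
From mathcomp Require Import all_classical all_reals all_analysis.
Set Implicit Arguments. Unset Strict Implicit. Unset Printing Implicit Defensive.
Local Open Scope classical_set_scope.

(* The ordinal omega+1 = {0,1,2,...} ∪ {omega}: [Some n] is n, [None] is omega. *)
Definition omega1 := option nat.

Definition omega1_lt (x y : omega1) : Prop :=
  match x, y with
  | Some m, Some n => (m < n)%N
  | Some _, None => True
  | None, _ => False
  end.

Definition omega1_interval (lo hi : option omega1) : set omega1 :=
  [set z | (match lo with None => True | Some a => omega1_lt a z end) /\
           (match hi with None => True | Some b => omega1_lt z b end)].

Definition omega1_open (U : set omega1) : Prop :=
  forall y, U y -> exists lo hi,
    omega1_interval lo hi y /\ omega1_interval lo hi `<=` U.

Definition omega1_continuous (X : topologicalType) (f : omega1 -> X) : Prop :=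
  forall U : set X, open U -> omega1_open (f @^-1` U).

Definition omega1_lsc (X : topologicalType) (phi : omega1 -> set X) : Prop :=
  forall U : set X, open U -> omega1_open [set y | phi y `&` U !=set0].

Definition strongly_L_selective (X : topologicalType) : Prop :=
  forall phi : omega1 -> set X,
    (forall y, phi y !=set0) -> omega1_lsc phi ->
    exists f : omega1 -> X, (forall y, phi y (f y)) /\ omega1_continuous f.

Definition L_selective (X : topologicalType) : Prop :=
  forall phi : omega1 -> set X,
    (forall y, phi y !=set0) -> (forall y, closed (phi y)) -> omega1_lsc phi ->
    exists f : omega1 -> X, (forall y, phi y (f y)) /\ omega1_continuous f.

From mathcomp Require Import all_boot all_order.
From mathcomp Require Import all_classical all_reals all_analysis.
Set Implicit Arguments. Unset Strict Implicit. Unset Printing Implicit Defensive.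
Local Open Scope classical_set_scope.

(* Fix m with H m nonempty and send n in omega+1 to the finite union
   H 0 ∪ ... ∪ H (max n m), and omega to {p}.  These values are nonempty,
   and closed when the H k are (as {p} is, X being T1).  Since the finite
   unions increase to a set whose closure contains p, every neighbourhood of
   p meets all but finitely many of them, which is lower semicontinuity at
   omega; the other points of omega+1 are isolated.  A continuous selection
   f then yields the sequence f 0, f 1, ... converging to f omega = p. *)

Lemma omega1_open_tail (U : set omega1) :
  (U None -> \forall n \near \oo, U (Some n)) -> omega1_open U.
Proof.
move=> tailU [n|] Un.
  exists (if n is k.+1 then Some (Some k) else None), (Some (Some n.+1)).
  split; first by case: n {Un} => [|k]; rewrite /omega1_interval /=.
  move=> [j|] /=; last by case: n {Un} => [|k] [].
  case: n Un => [|k] Un [lo_j hi_j]; first by case: j lo_j hi_j.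
  suff -> : j = k.+1 by [].
  by apply/eqP; rewrite eqn_leq -ltnS hi_j lo_j.
have [N _ tailN] := tailU Un.
exists (Some (Some N)), None; split => // -[j|] [//= ltNj _].
exact/tailN/ltnW.
Qed.

Lemma omega1_continuous_cvg (X : topologicalType) (f : omega1 -> X) :
  omega1_continuous f -> (fun n => f (Some n)) @ \oo --> f None.
Proof.
move=> fcont U; rewrite nbhsE => -[V [oV Vf] VU].
have [lo [hi [[lo_inf hi_inf] sub]]] := fcont V oV None Vf.
case: hi hi_inf sub => [? []|] _ sub.
exists (if lo is Some (Some N) then N.+1 else 0%N) => // n /= le_n.
apply/VU/(sub (Some n)); split => //.
by case: lo lo_inf {sub} le_n => [[N|]|].
Qed.

Definition fan {T : Type} (p : T) (G : nat -> set T) (y : omega1) : set T :=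
  if y is Some n then G n else [set p].

Section Fan.
Variables (X : topologicalType) (p : X) (G : nat -> set X).

Lemma fan_lsc :
  (forall U, open U -> U p -> \forall n \near \oo, G n `&` U !=set0) ->
  omega1_lsc (fan p G).
Proof.
by move=> meetG U oU; apply: omega1_open_tail => -[x [/= -> Up]]; apply: meetG.
Qed.

Lemma fan_selection_cvg (f : omega1 -> X) :
  (forall y, fan p G y (f y)) -> omega1_continuous f ->
  (fun n => f (Some n)) @ \oo --> p.
Proof. by move=> fG /omega1_continuous_cvg; rewrite (fG None). Qed.

End Fan.

Lemma closure_bigcup_meets_eventually (X : topologicalType) (p : X)
    (H G : nat -> set X) :
  closure (\bigcup_n H n) p -> (forall k n, (k <= n)%N -> H k `<=` G n) ->
  forall U, open U -> U p -> \forall n \near \oo, G n `&` U !=set0.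
Proof.
move=> clp HG U oU Up.
have [y [[k _ Hky] Uy]] := clp U (open_nbhs_nbhs (conj oU Up)).
by exists k => // n /= le_kn; exists y; split => //; apply: HG le_kn _ Hky.
Qed.

Theorem mainTheorem13 (X : topologicalType) (hT1 : accessible_space X)
  (p : X) (H : nat -> set X) :
  closure (\bigcup_n H n) p ->
  (strongly_L_selective X \/ (L_selective X /\ forall n, closed (H n))) ->
  exists u : nat -> X,
    (forall n, (\bigcup_k H k) (u n)) /\ u @ \oo --> p.
Proof.
move=> clp sel.
have [m [x Hmx]] : exists m, H m !=set0.
  by have [x [[m _ Hmx] _]] := clp setT filterT; exists m, x.
pose G n := \bigcup_(k in `I_(maxn n m).+1) H k.
have G_ne y : fan p G y !=set0.
  by case: y => [n|]; [exists x, m => //=; rewrite ltnS leq_maxr | exists p].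
have G_lsc : omega1_lsc (fan p G).
  apply: fan_lsc; apply: (closure_bigcup_meets_eventually clp) => k n le_kn y Hky.
  by exists k => //=; rewrite ltnS (leq_trans le_kn) ?leq_maxl.
have [f [fG fcont]] :
    exists f, (forall y, fan p G y (f y)) /\ omega1_continuous f.
  case: sel => [sel | [sel H_closed]]; first exact: sel.
  apply: sel => // -[n|]; last exact: accessible_closed_set1.
  exact: closed_bigcup (finite_II _) (fun k _ => H_closed k).
exists (fun n => f (Some n)); split; last exact: fan_selection_cvg fG fcont.
by move=> n; have [k _ Hk] := fG (Some n); exists k.
Qed.
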